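(* Let $P$ be an irreducible transition matrix on the finite set $S$, reversible with respect to $\pi$, and suppose $\mathrm{trace}(P)$ (equivalently, the sum of the eigenvalues of $P$) equals $\max\big(0,(2\pi_{\max}-1)/\pi_{\max}\big)$, where $\pi_{\max}=\max_x\pi(x)$. Then no other transition matrix that is reversible with respect to $\pi$ efficiency-dominates $P$.
   Context: $S$ is a finite set, and $\pi$ is a probability distribution on $S$ with $\pi(x)>0$ for all $x$. A transition matrix $P$ is reversible with respect to $\pi$ if $\pi(x)P(x,y)=\pi(y)P(y,x)$ for all $x,y$; irreducible if every state can be reached from every other with positive probability in some number of steps. For a Markov chain $X_1,X_2,\dots$ with transition matrix $P$ and $X_1\sim\pi$, $v(f,P)=\lim_{N\to\infty}\frac1N\mathrm{Var}\big(\sum_{i=1}^N f(X_i)\big)$. $P$ efficiency-dominates $Q$ if $v(f,P)\le v(f,Q)$ for all $f:S\to\mathbb R$. *)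

From HB Require Import structures.
From mathcomp Require Import all_boot all_order all_algebra.
From mathcomp Require Import all_classical all_reals ereal topology normedtype sequences.
Set Implicit Arguments. Unset Strict Implicit. Unset Printing Implicit Defensive.
Import Order.TTheory GRing.Theory Num.Theory.
Local Open Scope ring_scope.
Local Open Scope ereal_scope.
Local Open Scope ring_scope.

Section MC.
Variables (R : realType) (S : finType).

Definition pos_prob (pi : S -> R) : Prop :=
  (forall x, 0 < pi x) /\ \sum_x pi x = 1.

Definition transition_matrix (P : S -> S -> R) : Prop :=
  (forall x y, 0 <= P x y) /\ (forall x, \sum_y P x y = 1).

Definition reversible (pi : S -> R) (P : S -> S -> R) : Prop :=
  forall x y, pi x * P x y = pi y * P y x.

Fixpoint mpow (P : S -> S -> R) (n : nat) : S -> S -> R :=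
  match n with
  | 0 => fun x y => if x == y then 1 else 0
  | n'.+1 => fun x y => \sum_z mpow P n' x z * P z y
  end.

Definition irreducible (P : S -> S -> R) : Prop :=
  forall x y, exists n, 0 < mpow P n x y.

Definition trace (P : S -> S -> R) : R := \sum_x P x x.

Definition pi_max (pi : S -> R) : R := \big[Num.max/0]_x pi x.

Fixpoint chain_prob (P : S -> S -> R) (x : S) (s : seq S) : R :=
  match s with
  | [::] => 1
  | y :: s' => P x y * chain_prob P y s'
  end.

Definition path_prob (pi : S -> R) (P : S -> S -> R) (s : seq S) : R :=
  match s with
  | [::] => 1
  | x :: s' => pi x * chain_prob P x s'
  end.

Definition expect (pi : S -> R) (P : S -> S -> R) (N : nat)
    (g : N.-tuple S -> R) : R :=
  \sum_(w : N.-tuple S) path_prob pi P w * g w.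

Definition var_sum (pi : S -> R) (P : S -> S -> R) (f : S -> R) (N : nat) : R :=
  expect pi P (fun w : N.-tuple S => (\sum_(x <- w) f x) ^+ 2)
  - (expect pi P (fun w : N.-tuple S => \sum_(x <- w) f x)) ^+ 2.

Definition asym_var (pi : S -> R) (P : S -> S -> R) (f : S -> R) : \bar R :=
  limn (fun N : nat => ((var_sum pi P f N) / N%:R)%:E).

Definition eff_dominates (pi : S -> R) (P Q : S -> S -> R) : Prop :=
  forall f : S -> R, (asym_var pi P f <= asym_var pi Q f)%E.

End MC.

From HB Require Import structures.
From mathcomp Require Import all_boot all_order all_algebra.
From mathcomp Require Import all_classical all_reals ereal topology normedtype sequences.
From mathcomp Require Import ring lra.
Set Implicit Arguments. Unset Strict Implicit. Unset Printing Implicit Defensive.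
Import Order.TTheory GRing.Theory Num.Theory.
Import numFieldNormedType.Exports.
Local Open Scope ring_scope.

(* Write [<u, v>] for the [pi]-weighted inner product and [E_T(u) = <u, u> - <u, T u>] for
   the Dirichlet form. Under an irreducible reversible [T], every centered [f] solves the
   Poisson equation [f = h - T h], and the variance of [f(X_1) + ... + f(X_N)] is
   [N (2 <f, h> - <f, f>)] up to a bounded error, so [v(f, T) = 2 <f, h> - <f, f>].
   If [Q] is reducible, the centered indicator of a closed class is [Q]-harmonic, so its
   asymptotic variance under [Q] is infinite but finite under [P]. If [Q] is irreducible,
   [<f, h> = max_u (2 <f, u> - E_Q(u))], so [f = k - P k] has [v(f, Q) > v(f, P)] as soon as
   [E_Q(k) < E_P(k)]. Such a [k] exists because [trace P] is minimal: reversibility gives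
   [pi x Q x x >= 2 pi x - 1], so either [Q] exceeds [P] somewhere on the diagonal and [k]
   is a point mass, or the diagonals agree and [k] lives on two states where [Q] and [P]
   differ. *)

Section Operators.
Variables (R : realType) (S : finType).
Implicit Types (pi u v : S -> R) (T : S -> S -> R).

Definition tapp T u : S -> R := fun x => \sum_y T x y * u y.

Definition dotp pi u v : R := \sum_x pi x * (u x * v x).

Definition dirichlet pi T u : R := dotp pi u u - dotp pi u (tapp T u).

Lemma tappB T u v x : tapp T (fun y => u y - v y) x = tapp T u x - tapp T v x.
Proof. by rewrite /tapp -sumrB; apply: eq_bigr => y _; rewrite mulrBr. Qed.

Lemma tapp_cst T c x : transition_matrix T -> tapp T (fun=> c) x = c.
Proof. by case=> _ hT1; rewrite /tapp -mulr_suml hT1 mul1r. Qed.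

Lemma dotpC pi u v : dotp pi u v = dotp pi v u.
Proof. by apply: eq_bigr => x _; rewrite (mulrC (u x)). Qed.

Lemma dotp_poisson pi T f h : (forall x, f x = h x - tapp T h x) ->
  dotp pi f h = dirichlet pi T h.
Proof. by move=> hf; rewrite /dirichlet /dotp -sumrB; apply: eq_bigr => x _; rewrite hf; ring. Qed.

Lemma dotp_gt0 pi u z : (forall x, 0 < pi x) -> u z != 0 -> 0 < dotp pi u u.
Proof.
move=> hpi uz; rewrite /dotp (bigD1 z) //= ltr_pwDl //.
  by rewrite mulr_gt0 // -expr2 exprn_even_gt0.
apply: sumr_ge0 => x _; apply: mulr_ge0; [exact: ltW | by rewrite -expr2 sqr_ge0].
Qed.

Section Reversible.
Variables (pi : S -> R) (T : S -> S -> R).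
Hypotheses (hT : transition_matrix T) (hrev : reversible pi T).

Lemma reversible_stationary y : \sum_x pi x * T x y = pi y.
Proof.
under eq_bigr do rewrite hrev.
by rewrite -mulr_sumr hT.2 mulr1.
Qed.

Lemma mean_tapp u : \sum_x pi x * tapp T u x = \sum_x pi x * u x.
Proof.
rewrite /tapp; under eq_bigr do rewrite mulr_sumr.
rewrite exchange_big /=; apply: eq_bigr => y _.
by rewrite -reversible_stationary mulr_suml; apply: eq_bigr => x _; rewrite mulrA.
Qed.

Lemma dotp_tappC u v : dotp pi (tapp T u) v = dotp pi u (tapp T v).
Proof.
rewrite /dotp /tapp.
transitivity (\sum_x \sum_y pi x * T x y * u y * v x).
  by apply: eq_bigr => x _; rewrite mulr_suml mulr_sumr; apply: eq_bigr => y _; ring.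
rewrite exchange_big /=; apply: eq_bigr => y _; rewrite !mulr_sumr.
by apply: eq_bigr => x _; rewrite hrev; ring.
Qed.

Hypothesis hpi0 : forall x, 0 <= pi x.

Lemma dirichlet_ge0 u : 0 <= dirichlet pi T u.
Proof.
have squares : \sum_x \sum_y pi x * T x y * (u x - u y) ^+ 2 = 2 * dirichlet pi T u.
  transitivity (\sum_x pi x * (u x * u x) * \sum_y T x y
      - 2 * \sum_x pi x * (u x * tapp T u x) + \sum_x pi x * tapp T (fun y => u y * u y) x).
    rewrite mulr_sumr -sumrB -big_split /=; apply: eq_bigr => x _.
    rewrite /tapp !mulr_sumr -!sumrB -big_split /=; apply: eq_bigr => y _; ring.
  under eq_bigr do rewrite hT.2 mulr1.
  by rewrite mean_tapp /dirichlet /dotp; ring.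
rewrite -(pmulr_rge0 _ (ltr0n _ 2)) -squares.
apply: sumr_ge0 => x _; apply: sumr_ge0 => y _.
by rewrite mulr_ge0 ?sqr_ge0 // mulr_ge0 // hT.1.
Qed.

(* Completing the square: the defect in this inequality is [dirichlet pi T (h - u)]. *)
Lemma poisson_variational f h u : (forall x, f x = h x - tapp T h x) ->
  2 * dotp pi f u - dirichlet pi T u <= dotp pi f h.
Proof.
move=> hf.
have := dirichlet_ge0 (fun x => h x - u x).
have fu : dotp pi f u = dotp pi h u - dotp pi h (tapp T u).
  by rewrite -dotp_tappC /dotp -sumrB; apply: eq_bigr => x _; rewrite hf; ring.
have sym : dotp pi u (tapp T h) = dotp pi h (tapp T u) by rewrite -dotp_tappC dotpC.
have -> : dirichlet pi T (fun x => h x - u x) = dirichlet pi T h - dotp pi h u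
    - dotp pi u h + dotp pi h (tapp T u) + dotp pi u (tapp T h) + dirichlet pi T u.
  rewrite /dirichlet /dotp -!sumrB -!big_split /=; apply: eq_bigr => x _.
  rewrite tappB; ring.
rewrite (dotpC pi u h) sym fu (dotp_poisson _ hf) /dirichlet; lra.
Qed.

End Reversible.
End Operators.

Section Reachability.
Variables (R : realType) (S : finType) (T : S -> S -> R).
Hypothesis hT : transition_matrix T.

Lemma mpow_ge0 n x y : 0 <= mpow T n x y.
Proof.
elim: n y => [|n IH] y /=; first by case: (x == y).
by apply: sumr_ge0 => z _; rewrite mulr_ge0 // hT.1.
Qed.

Lemma mpowS_gt0 n x y :
  0 < mpow T n.+1 x y <-> exists z, 0 < mpow T n x z /\ 0 < T z y.
Proof.
split=> [xy | [z [xz zy]]] /=; last first.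
  rewrite (bigD1 z) //= ltr_pwDl ?mulr_gt0 // sumr_ge0 // => w _.
  by rewrite mulr_ge0 ?mpow_ge0 ?hT.1.
have [z xzy] : exists z, 0 < mpow T n x z * T z y.
  apply/existsP; apply: contraLR xy; rewrite negb_exists => /forallP hall.
  by rewrite -leNgt; apply: sumr_le0 => z _; rewrite leNgt hall.
exists z; split; rewrite lt_def ?mpow_ge0 ?hT.1 andbT; apply: contraTneq xzy => ->;
  by rewrite ?mul0r ?mulr0 ltxx.
Qed.

Lemma mpow_gt0_closed (A : pred S) n x y :
  (forall z w, A z -> 0 < T z w -> A w) -> A x -> 0 < mpow T n x y -> A y.
Proof.
move=> closedA Ax; elim: n y => [|n IH] y /=.
  by case: eqP => [<- //|_]; rewrite ltxx.
by case/mpowS_gt0 => z [xz zy]; apply: closedA zy; apply: IH.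
Qed.

(* Maximum principle: the set where [u] attains its maximum is closed under transitions. *)
Lemma harmonic_cst u : irreducible T -> (forall x, tapp T u x = u x) ->
  forall x y, u x = u y.
Proof.
move=> hirr hu x y.
case: (arg_maxP u (isT : xpredT x)) => x0 _ umax.
have closed_max z w : u z == u x0 -> 0 < T z w -> u w == u x0.
  move=> /eqP uz zw.
  have defect0 : \sum_v T z v * (u x0 - u v) = 0.
    under eq_bigr do rewrite mulrBr.
    by rewrite sumrB -mulr_suml hT.2 mul1r -/(tapp T u z) hu uz subrr.
  have term_ge0 v : true -> 0 <= T z v * (u x0 - u v).
    by move=> _; rewrite mulr_ge0 ?hT.1 // subr_ge0; apply: umax.
  have /eqP := psumr_eq0P term_ge0 defect0 (i := w) isT.
  by rewrite mulf_eq0 (gt_eqF zw) subr_eq0 eq_sym.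
have [n xn] := hirr x0 x; have [m ym] := hirr x0 y.
have /eqP -> := mpow_gt0_closed closed_max (eqxx _) xn.
by have /eqP -> := mpow_gt0_closed closed_max (eqxx _) ym.
Qed.

(* By reversibility no transition enters the set of states reachable from [x], so its
   indicator is harmonic; it is not constant when some [y] is unreachable. *)
Lemma exists_harmonic pi : pos_prob pi -> reversible pi T -> ~ irreducible T ->
  exists f, [/\ forall x, tapp T f x = f x, \sum_x pi x * f x = 0 & 0 < dotp pi f f].
Proof.
case=> hpi hpi1 hrev hred.
have [x /existsNP [y /forallNP xy]] := (existsNP _).2 hred.
pose reach z := `[< exists n, 0 < mpow T n x z >].
pose c z : R := (reach z)%:R.
have out0 z w : reach z -> ~~ reach w -> T z w = 0.
  move=> /asboolP [n xz] /asboolP xw; apply/eqP; rewrite eq_le hT.1 andbT leNgt.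
  by apply/negP => zw; apply: xw; exists n.+1; apply/mpowS_gt0; exists z.
have c_step z w : T z w * c w = T z w * c z.
  rewrite /c; case: (boolP (reach z)) => rz; case: (boolP (reach w)) => rw //;
    suff -> : T z w = 0 by rewrite !mul0r.
    exact: out0.
  have /eqP := hrev z w; rewrite (out0 w z rw rz) mulr0 mulf_eq0 (gt_eqF (hpi z)).
  by move=> /eqP.
pose f z := c z - \sum_v pi v * c v.
exists f; split.
- move=> z; rewrite tappB tapp_cst //; congr (_ - _).
  by rewrite /tapp; under eq_bigr do rewrite c_step; rewrite -mulr_suml hT.2 mul1r.
- by under eq_bigr do rewrite mulrBr; rewrite sumrB -mulr_suml hpi1 mul1r subrr.
have fxy : f x - f y = 1.
  have rx : reach x by apply/asboolP; exists 0%N => /=; rewrite eqxx ltr01.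
  have ry : ~~ reach y by apply/asboolP => -[n]; apply: xy.
  by rewrite /f /c rx (negbTE ry) opprB addrA subrK subr0.
have [fx0 | fx0] := eqVneq (f x) 0; last exact: dotp_gt0 fx0.
by apply: (dotp_gt0 (z := y)) => //; apply/eqP => fy0; move: fxy; rewrite fx0 fy0 subr0; lra.
Qed.

End Reachability.

Section PoissonEquation.
Variables (R : realType) (S : finType) (T : S -> S -> R).
Hypotheses (hT : transition_matrix T) (hirr : irreducible T).

Definition poisson_op (u : {ffun S -> R^o}) : {ffun S -> R^o} :=
  [ffun x => u x - tapp T u x].

Lemma poisson_op_is_linear : linear poisson_op.
Proof.
move=> a u v; apply/ffunP => x; rewrite !ffunE /tapp.
under eq_bigr do rewrite !ffunE mulrDr mulrCA.
by rewrite big_split /= -mulr_sumr /GRing.scale /=; ring.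
Qed.

HB.instance Definition _ :=
  GRing.isLinear.Build R {ffun S -> R^o} {ffun S -> R^o} _ poisson_op poisson_op_is_linear.

Definition ones : {ffun S -> R^o} := [ffun=> 1].

Lemma lker_poisson_op : (lker (linfun poisson_op) <= <[ones]>)%VS.
Proof.
apply/subvP => u; rewrite memv_ker lfunE => /eqP Lu0.
have harm x : tapp T u x = u x.
  have /eqP := congr1 (fun w : {ffun S -> R^o} => w x) Lu0.
  by rewrite !ffunE subr_eq0 eq_sym => /eqP.
apply/vlineP; case: (pickP (fun _ : S => true)) => [x0 _ | S0]; last first.
  by exists 0; apply/ffunP => x; have := S0 x.
exists (u x0); apply/ffunP => x; rewrite !ffunE -[_%:A]/(u x0 * 1) mulr1.
exact: (harmonic_cst hT hirr harm).
Qed.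

(* Fredholm alternative: the image of [I - T] consists of centered functions, hence meets
   the constants trivially, and has codimension at most one by [lker_poisson_op]. *)
Lemma poisson_solvable pi g : pos_prob pi -> reversible pi T ->
  \sum_x pi x * g x = 0 -> exists h, forall x, g x = h x - tapp T h x.
Proof.
move=> [hpi hpi1] hrev hg; pose L := linfun poisson_op.
have LE u x : L u x = u x - tapp T u x by rewrite lfunE ffunE.
have mean_L u : \sum_x pi x * L u x = 0.
  by under eq_bigr do rewrite LE mulrBr; rewrite sumrB mean_tapp // subrr.
have mean_ones c : \sum_x pi x * (c *: ones) x = c.
  under eq_bigr do rewrite !ffunE -[_%:A]/(c * 1) mulr1.
  by rewrite -mulr_suml hpi1 mul1r.
have img_ones : (limg L :&: <[ones]> = 0)%VS.
  apply/eqP; rewrite -subv0; apply/subvP => w; rewrite memv_cap memv0.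
  case/andP => /memv_imgP [u _ ->] /vlineP [c Lu].
  by rewrite Lu -(mean_ones c) -Lu mean_L scale0r.
have img_full : (limg L + <[ones]> = fullv)%VS.
  apply/eqP; rewrite eqEdim subvf /= dimv_disjoint_sum //.
  have := limg_ker_dim L fullv; rewrite capfv => <-.
  by rewrite addnC leq_add2l dimvS ?lker_poisson_op.
have : [ffun x => g x : R^o] \in (limg L + <[ones]>)%VS by rewrite img_full memvf.
case/memv_addP => _ /memv_imgP [u _ ->] [_ /vlineP [c ->] gE].
have c0 : c = 0.
  have := congr1 (fun w : {ffun S -> R^o} => \sum_x pi x * w x) gE => /=.
  under eq_bigr do rewrite ffunE; under [X in _ = X]eq_bigr do rewrite ffunE mulrDr.
  by rewrite hg big_split /= mean_L mean_ones add0r.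
exists u => x; have /= := congr1 (fun w : {ffun S -> R^o} => w x) gE.
by rewrite c0 scale0r addr0 ffunE LE.
Qed.

End PoissonEquation.

Section Bounds.
Variables (R : realType) (S : finType) (T : S -> S -> R).
Hypothesis hT : transition_matrix T.

Lemma norm_tapp_le u M : (forall y, `|u y| <= M) -> forall x, `|tapp T u x| <= M.
Proof.
move=> uM x; apply: (le_trans (ler_norm_sum _ _ _)).
apply: (@le_trans _ _ (\sum_y T x y * M)).
  by apply: ler_sum => y _; rewrite normrM ger0_norm ?hT.1 // ler_wpM2l ?hT.1.
by rewrite -mulr_suml hT.2 mul1r.
Qed.

Lemma norm_iter_tapp_le u M : (forall y, `|u y| <= M) ->
  forall n x, `|iter n (tapp T) u x| <= M.
Proof. by move=> uM; elim=> [|n IH] x //=; apply: norm_tapp_le. Qed.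

Lemma dotp_iter_tapp_bounded pi h : exists B, forall n, `|dotp pi h (iter n (tapp T) h)| <= B.
Proof.
pose M := \sum_y `|h y|.
have hM y : `|h y| <= M by rewrite /M (bigD1 y) //= lerDl sumr_ge0.
exists (\sum_x `|pi x * h x| * M) => n.
apply: (le_trans (ler_norm_sum _ _ _)); apply: ler_sum => x _.
by rewrite mulrA normrM ler_wpM2l // norm_iter_tapp_le.
Qed.

End Bounds.

Section Limits.
Variable R : realType.
Local Open Scope classical_set_scope.

Lemma cvg_div_nat (a : nat -> R) c B : (forall N, `|a N - N%:R * c| <= B) ->
  (fun N => (a N / N%:R)%:E) @ \oo --> c%:E.
Proof.
move=> aB; apply: cvg_EFin; first by near=> N.
apply/cvgrPdist_le => e e0; near=> N.
have N0 : (0 < N)%N by near: N; exact: nbhs_infty_gt.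
have NB : `|B| / e <= N%:R by near: N; exact: nbhs_infty_ger.
have N0' : 0 < N%:R :> R by rewrite ltr0n.
have -> : c - a N / N%:R = (N%:R * c - a N) / N%:R by field; rewrite lt0r_neq0.
rewrite /= normrM normfV (ger0_norm (ltW N0')) ler_pdivrMr // distrC.
apply: (le_trans (aB N)); apply: (le_trans (ler_norm B)).
by rewrite -ler_pdivrMl // mulrC.
Unshelve. all: by end_near.
Qed.

Lemma cvg_nat_mul_pinfty (c : R) : 0 < c -> (fun N => (N%:R * c)%:E) @ \oo --> +oo%E.
Proof.
move=> c0; apply/cvgeryP/cvgryPge => A; near=> N.
have NA : A / c <= N%:R by near: N; exact: nbhs_infty_ger.
by rewrite -ler_pdivrMr.
Unshelve. all: by end_near.
Qed.

End Limits.

Section PathSums.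
Variables (R : realType) (S : finType).

Lemma sum_tupleS N (F : N.+1.-tuple S -> R) :
  \sum_(w : N.+1.-tuple S) F w = \sum_x \sum_(t : N.-tuple S) F [tuple of x :: t].
Proof.
rewrite pair_big /= (reindex (fun p : S * N.-tuple S => [tuple of p.1 :: p.2])) //=.
exists (fun w : N.+1.-tuple S => (thead w, [tuple of behead w])) => [[x t] _ | w _] /=.
  by congr (_, _); apply: val_inj.
by rewrite -tuple_eta.
Qed.

Lemma sum_tuple0 (F : 0.-tuple S -> R) : \sum_(w : 0.-tuple S) F w = F [tuple].
Proof.
rewrite (eq_bigr (fun _ => F [tuple])) => [|w _]; last by rewrite tuple0.
by rewrite sumr_const card_tuple expn0 mulr1n.
Qed.

Lemma var_sum0 (pi : S -> R) T g : var_sum pi T g 0 = 0.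
Proof. by rewrite /var_sum /expect !sum_tuple0 /= big_nil expr0n /= mulr0 expr0n subr0. Qed.

End PathSums.

Section ChainMoments.
Variables (R : realType) (S : finType) (pi : S -> R) (T : S -> S -> R).
Hypotheses (hpi1 : \sum_x pi x = 1) (hT : transition_matrix T) (hrev : reversible pi T).

Definition cond_sum (g : S -> R) N x : R :=
  \sum_(t : N.-tuple S) chain_prob T x t * \sum_(y <- t) g y.

Lemma sum_chain_probS N x (F : seq S -> R) :
  \sum_(t : N.+1.-tuple S) chain_prob T x t * F t =
  \sum_y T x y * \sum_(t : N.-tuple S) chain_prob T y t * F (y :: t).
Proof.
rewrite sum_tupleS; apply: eq_bigr => y _; rewrite mulr_sumr.
by apply: eq_bigr => t _ /=; rewrite mulrA.
Qed.

Lemma expectS N (F : seq S -> R) :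
  expect pi T (fun w : N.+1.-tuple S => F w) =
  \sum_x pi x * \sum_(t : N.-tuple S) chain_prob T x t * F (x :: t).
Proof.
rewrite /expect sum_tupleS; apply: eq_bigr => x _; rewrite mulr_sumr.
by apply: eq_bigr => t _ /=; rewrite mulrA.
Qed.

Lemma sum_chain_prob N x : \sum_(t : N.-tuple S) chain_prob T x t = 1.
Proof.
elim: N x => [|N IH] x; first by rewrite sum_tuple0.
rewrite -[LHS]/(\sum_(t : N.+1.-tuple S) chain_prob T x t).
under eq_bigr do rewrite -[chain_prob _ _ _]mulr1.
rewrite (sum_chain_probS N x (fun=> 1)).
by under eq_bigr do under eq_bigr do rewrite mulr1; under eq_bigr do rewrite IH mulr1; exact: hT.2.
Qed.

Lemma sum_pi_chain_prob s : \sum_x pi x * chain_prob T x s = path_prob pi T s.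
Proof.
case: s => [|y s] /=; first by under eq_bigr do rewrite mulr1.
under eq_bigr do rewrite mulrA.
by rewrite -mulr_suml reversible_stationary.
Qed.

(* Stationarity: the chain observed from the second step on is again started from [pi]. *)
Lemma expect_shift N (F : seq S -> R) :
  \sum_x pi x * \sum_(t : N.-tuple S) chain_prob T x t * F t =
  expect pi T (fun t : N.-tuple S => F t).
Proof.
rewrite /expect; under eq_bigr do rewrite mulr_sumr.
rewrite exchange_big /=; apply: eq_bigr => t _.
by rewrite -sum_pi_chain_prob mulr_suml; apply: eq_bigr => x _; rewrite mulrA.
Qed.

Lemma cond_sum0 g x : cond_sum g 0 x = 0.
Proof. by rewrite /cond_sum sum_tuple0 big_nil mulr0. Qed.

Lemma cond_sumS g N x : cond_sum g N.+1 x = tapp T (fun y => g y + cond_sum g N y) x.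
Proof.
rewrite /cond_sum (sum_chain_probS N x (fun t => \sum_(y <- t) g y)).
apply: eq_bigr => y _; congr (_ * _).
under eq_bigr do rewrite big_cons mulrDr.
by rewrite big_split /= -mulr_suml sum_chain_prob mul1r.
Qed.


Section Centered.
Variable g : S -> R.
Hypothesis hg : \sum_x pi x * g x = 0.

Lemma expect_sum_centered N : expect pi T (fun w : N.-tuple S => \sum_(y <- w) g y) = 0.
Proof.
elim: N => [|N IH]; first by rewrite /expect sum_tuple0 big_nil mulr0.
rewrite (expectS N (fun w => \sum_(y <- w) g y)).
under eq_bigr do under eq_bigr do rewrite big_cons mulrDr.
under eq_bigr do rewrite big_split /= -mulr_suml sum_chain_prob mul1r mulrDr.
by rewrite big_split /= hg (expect_shift N (fun t => \sum_(y <- t) g y)) IH addr0.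
Qed.

Lemma var_sumS N :
  var_sum pi T g N.+1 = var_sum pi T g N + dotp pi g g + 2 * dotp pi g (cond_sum g N).
Proof.
have first_step x :
    \sum_(t : N.-tuple S) chain_prob T x t * (\sum_(y <- x :: t) g y) ^+ 2 =
    g x * g x + 2 * (g x * cond_sum g N x)
    + \sum_(t : N.-tuple S) chain_prob T x t * (\sum_(y <- t) g y) ^+ 2.
  have mass : g x * g x = \sum_(t : N.-tuple S) chain_prob T x t * (g x * g x).
    by rewrite -mulr_suml sum_chain_prob mul1r.
  rewrite /cond_sum mass !mulr_sumr -!big_split; apply: eq_bigr => t _ /=.
  by rewrite big_cons; ring.
rewrite /var_sum !expect_sum_centered expr0n /= !subr0.
rewrite (expectS N (fun w => (\sum_(y <- w) g y) ^+ 2)).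
under eq_bigr do rewrite first_step !mulrDr (mulrCA _ 2).
rewrite !big_split /= -mulr_sumr.
rewrite (expect_shift N (fun t => (\sum_(y <- t) g y) ^+ 2)) /dotp; ring.
Qed.

End Centered.

Section PoissonVariance.
Variables (g h : S -> R).
Hypothesis hgh : forall x, g x = h x - tapp T h x.

Lemma mean_poisson : \sum_x pi x * g x = 0.
Proof. by under eq_bigr do rewrite hgh mulrBr; rewrite sumrB mean_tapp // subrr. Qed.

Lemma cond_sum_poisson N x : cond_sum g N x = tapp T h x - iter N.+1 (tapp T) h x.
Proof.
elim: N x => [|N IH] x; first by rewrite cond_sum0 /= subrr.
rewrite cond_sumS /= -tappB; apply: eq_bigr => y _.
by rewrite IH hgh /=; ring.
Qed.

Lemma var_sum_poisson N : var_sum pi T g N =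
  N%:R * (2 * dotp pi g h - dotp pi g g)
  + 2 * (dotp pi h (iter N.+1 (tapp T) h) - dotp pi h (tapp T h)).
Proof.
elim: N => [|N IH]; first by rewrite var_sum0 mul0r add0r /= subrr mulr0.
rewrite var_sumS ?mean_poisson // IH.
have cond_step : dotp pi g (cond_sum g N) = dotp pi g (tapp T h)
    - dotp pi h (iter N.+1 (tapp T) h) + dotp pi h (iter N.+2 (tapp T) h).
  have -> : dotp pi h (iter N.+2 (tapp T) h) = dotp pi (tapp T h) (iter N.+1 (tapp T) h).
    by rewrite dotp_tappC.
  rewrite /dotp -sumrB -big_split /=; apply: eq_bigr => x _.
  by rewrite cond_sum_poisson hgh /=; ring.
have slope : dotp pi g g + 2 * dotp pi g (tapp T h) = 2 * dotp pi g h - dotp pi g g.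
  rewrite /dotp !mulr_sumr -sumrB -big_split /=; apply: eq_bigr => x _.
  by rewrite hgh; ring.
by rewrite cond_step -natr1 -slope; ring.
Qed.

Lemma asym_var_poisson : asym_var pi T g = (2 * dotp pi g h - dotp pi g g)%:E.
Proof.
have [B hB] := dotp_iter_tapp_bounded hT pi h.
apply: (cvg_lim (@ereal_hausdorff R)); apply: (@cvg_div_nat _ _ _ (2 * (B + B))) => N.
rewrite var_sum_poisson addrAC subrr add0r normrM ger0_norm // ler_wpM2l //.
by apply: (le_trans (ler_normB _ _)); apply: lerD; [exact: hB | exact: (hB 1%N)].
Qed.

End PoissonVariance.

Section HarmonicVariance.
Variable f : S -> R.
Hypotheses (hf : forall x, tapp T f x = f x) (hf0 : \sum_x pi x * f x = 0).

Lemma cond_sum_harmonic N x : cond_sum f N x = N%:R * f x.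
Proof.
elim: N x => [|N IH] x; first by rewrite cond_sum0 mul0r.
rewrite cond_sumS -[in RHS]hf /tapp mulr_sumr; apply: eq_bigr => y _.
by rewrite IH -natr1; ring.
Qed.

Lemma var_sum_harmonic N : var_sum pi T f N = N%:R ^+ 2 * dotp pi f f.
Proof.
elim: N => [|N IH]; first by rewrite var_sum0 expr0n /= mul0r.
rewrite var_sumS // IH.
have -> : dotp pi f (cond_sum f N) = N%:R * dotp pi f f.
  by rewrite /dotp mulr_sumr; apply: eq_bigr => x _; rewrite cond_sum_harmonic; ring.
by rewrite -natr1; ring.
Qed.

Lemma asym_var_harmonic : 0 < dotp pi f f -> asym_var pi T f = +oo%E.
Proof.
move=> f_pos; apply: (cvg_lim (@ereal_hausdorff R)).
have -> : (fun N => (var_sum pi T f N / N%:R)%:E) = (fun N => (N%:R * dotp pi f f)%:E).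
  apply: funext => -[|N]; first by rewrite var_sum0 !mul0r.
  by rewrite var_sum_harmonic; congr (_%:E); field.
exact: cvg_nat_mul_pinfty.
Qed.

End HarmonicVariance.

End ChainMoments.

Section TraceBound.
Variables (R : realType) (S : finType) (pi : S -> R) (Q : S -> S -> R).
Hypotheses (hpi : pos_prob pi) (hQ : transition_matrix Q) (hrev : reversible pi Q).

Lemma transition_le1 x y : Q x y <= 1.
Proof. by rewrite -(hQ.2 x) (bigD1 y) //= lerDl sumr_ge0 // => z _; apply: hQ.1. Qed.

(* Stationarity at [x]: the other states send at most [1 - pi x] into [x]. *)
Lemma diag_ge x : 2 * pi x - 1 <= pi x * Q x x.
Proof.
case: hpi => hpi0 hpi1.
have inflow : pi x * Q x x + \sum_(y | y != x) pi y * Q y x = pi x.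
  by rewrite -[RHS](reversible_stationary hQ hrev) [RHS](bigD1 x).
have : \sum_(y | y != x) pi y * Q y x <= 1 - pi x.
  rewrite -hpi1 [X in _ <= X - _](bigD1 x) //= addrAC subrr add0r.
  apply: ler_sum => y _; rewrite -[X in _ <= X]mulr1 ler_wpM2l ?transition_le1 //.
  exact: ltW.
lra.
Qed.

Lemma pi_max_attained : exists x, pi_max pi = pi x.
Proof.
case: hpi => hpi0 hpi1.
case: (pickP (fun _ : S => true)) => [x0 _ | S0]; last first.
  by move: hpi1; rewrite big_pred0 // => /eqP; rewrite eq_sym oner_eq0.
by eexists; rewrite /pi_max (bigmax_eq_arg _ x0) // => x _; apply: ltW.
Qed.

Lemma trace_ge_pi_max : Num.max 0 ((2 * pi_max pi - 1) / pi_max pi) <= trace Q.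
Proof.
have [x ->] := pi_max_attained; have pix := hpi.1 x.
have Qdiag : Q x x <= trace Q.
  by rewrite /trace (bigD1 x) //= lerDl sumr_ge0 // => y _; apply: hQ.1.
rewrite ge_max (le_trans (hQ.1 x x) Qdiag) /=; apply: le_trans Qdiag.
by rewrite ler_pdivrMr // [Q x x * _]mulrC diag_ge.
Qed.

End TraceBound.

Section DirichletGap.
Variables (R : realType) (S : finType) (pi : S -> R).

Definition two_point (x y : S) (a b : R) : S -> R :=
  fun u => a * (u == x)%:R + b * (u == y)%:R.

Lemma sum_mul_delta (F : S -> R) x : \sum_u F u * (u == x)%:R = F x.
Proof.
rewrite (bigD1 x) //= eqxx mulr1 big1 ?addr0 // => u /negbTE ->.
by rewrite mulr0.
Qed.

Lemma dotp_two_point T x y a b :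
  dotp pi (two_point x y a b) (tapp T (two_point x y a b)) =
  pi x * a * (T x x * a + T x y * b) + pi y * b * (T y x * a + T y y * b).
Proof.
have tapp_two_point u : tapp T (two_point x y a b) u = T u x * a + T u y * b.
  rewrite /tapp /two_point (eq_bigr (fun v => T u v * a * (v == x)%:R
    + T u v * b * (v == y)%:R)) => [|v _]; last by ring.
  by rewrite big_split /= !sum_mul_delta.
rewrite /dotp; under eq_bigr do rewrite tapp_two_point /two_point.
rewrite (eq_bigr (fun u => pi u * a * (T u x * a + T u y * b) * (u == x)%:R
    + pi u * b * (T u x * a + T u y * b) * (u == y)%:R)) => [|u _]; last by ring.
by rewrite big_split /= !sum_mul_delta.
Qed.

Variables (P Q : S -> S -> R).
Hypotheses (hpi : forall x, 0 < pi x) (hrevP : reversible pi P) (hrevQ : reversible pi Q).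

(* Either [Q] keeps more mass at some state, or the diagonals agree and a two-point test
   function sees an off-diagonal difference twice, by reversibility. *)
Lemma exists_dirichlet_gap : trace P <= trace Q -> Q <> P ->
  exists k, dirichlet pi Q k < dirichlet pi P k.
Proof.
move=> trPQ QP.
suff [k gap] : exists k, dotp pi k (tapp P k) < dotp pi k (tapp Q k).
  by exists k; rewrite /dirichlet; lra.
case: (boolP [exists x, P x x < Q x x]) => [/existsP [x PQx] | ].
  exists (two_point x x 1 0); rewrite !dotp_two_point.
  by have := hpi x; nra.
rewrite negb_exists => /forallP QPdiag.
have diagE x : Q x x = P x x.
  have le_diag y : 0 <= P y y - Q y y by rewrite subr_ge0 leNgt QPdiag.
  have sum0 : \sum_y (P y y - Q y y) = 0.
    by apply/eqP; rewrite eq_le sumr_ge0 // andbT sumrB subr_le0.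
  have /eqP := psumr_eq0P (fun y _ => le_diag y) sum0 (i := x) isT.
  by rewrite subr_eq0 eq_sym => /eqP.
have [x [y Qxy]] : exists x y, Q x y != P x y.
  apply: contra_notP QP => noxy; apply: funext => x; apply: funext => y.
  by apply/eqP; apply: contra_notT noxy => Qxy; exists x, y.
pose b := Q x y - P x y.
have b2 : 0 < pi x * (b * b) by rewrite mulr_gt0 // -expr2 exprn_even_gt0 // subr_eq0.
have flux : pi y * (Q y x - P y x) = pi x * b by rewrite mulrBr -hrevP -hrevQ -mulrBr.
exists (two_point x y 1 b); rewrite !dotp_two_point !diagE -subr_gt0.
rewrite (_ : _ - _ = pi x * b * b + b * (pi y * (Q y x - P y x))); last by rewrite /b; ring.
by rewrite flux mulrCA -mulrA addr_gt0.
Qed.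

End DirichletGap.

Theorem theorem8 (R : realType) (S : finType) (pi : S -> R) (P : S -> S -> R)
  (hpi : pos_prob pi) (hP : transition_matrix P) (hirr : irreducible P)
  (hrev : reversible pi P)
  (htr : trace P = Num.max 0 ((2 * pi_max pi - 1) / pi_max pi)) :
  forall Q : S -> S -> R, transition_matrix Q -> reversible pi Q -> Q <> P ->
    ~ eff_dominates pi Q P.
Proof.
move=> Q hQ hrevQ QP dom.
have hpi0 x : 0 <= pi x by apply/ltW/hpi.1.
case: (pselect (irreducible Q)) => [hirrQ | hredQ].
- have trPQ : trace P <= trace Q by rewrite htr trace_ge_pi_max.
  have [k gap] := exists_dirichlet_gap hpi.1 hrev hrevQ trPQ QP.
  pose f x := k x - tapp P k x.
  have fk : forall x, f x = k x - tapp P k x by [].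
  have [h fh] := poisson_solvable hQ hirrQ hpi hrevQ (mean_poisson hP hrev fk).
  have := dom f; rewrite (asym_var_poisson hpi.2 hQ hrevQ fh).
  rewrite (asym_var_poisson hpi.2 hP hrev fk) lee_fin.
  have := poisson_variational hQ hrevQ hpi0 k fh.
  rewrite (dotp_poisson _ fk); lra.
- have [g [harm g0 gpos]] := exists_harmonic hQ hpi hrevQ hredQ.
  have [k gk] := poisson_solvable hP hirr hpi hrev g0.
  have := dom g; rewrite (asym_var_harmonic hpi.2 hQ hrevQ harm g0 gpos).
  by rewrite (asym_var_poisson hpi.2 hP hrev gk) leye_eq.
Qed.
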